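(* Let $Z_i=(X_i,Y_i)$, $i=1,\dots,n+1$, be i.i.d. from a distribution $\mathcal P_{XY}$ on $\mathbb R^p\times\mathbb R$ (calibration samples $Z_1,\dots,Z_n$ and test sample $Z_{n+1}$), and let $V(\cdot)$ be a fixed (non-random, data-independent) real-valued score function, $V_i=V(Z_i)$. Let $H:\mathbb R^p\times\mathbb R^p\to[0,1]$ be a localizer depending on the data only through the unordered set $\{X_1,\dots,X_{n+1}\}$, with $H(x,x)=1$; put $H_{ij}=H(X_i,X_j)$, $p^H_{ij}=H_{ij}/\sum_{k=1}^{n+1}H_{ik}$ and $\Gamma=\{\sum_{k\in I}p^H_{ik}: i\in\{1,\dots,n+1\},\ I\subseteq\{1,\dots,n+1\}\}$. For $v\in\mathbb R$ let $\hat{\mathcal F}_i(v)=\sum_{j=1}^{n}p^H_{ij}\delta_{V_j}+p^H_{i,n+1}\delta_v$ ($i=1,\dots,n+1$), and $\hat{\mathcal F}=\sum_{j=1}^{n}p^H_{n+1,j}\delta_{V_j}+p^H_{n+1,n+1}\delta_{+\infty}$. Fix $\alpha\in(0,1)$. For each $v$, let $\tilde\alpha(v)$ be the smallest $\tilde\alpha\in\Gamma$ such that $$\frac{1}{n+1}\sum_{i=1}^{n+1}\mathbb 1\{V_i\le Q(\tilde\alpha;\hat{\mathcal F}_i(v))\}\ge\alpha,$$ where in this sum $V_{n+1}$ is set equal to $v$. Set $C_V(X_{n+1})=\{v: v\le Q(\tilde\alpha(v);\hat{\mathcal F})\}$ and $C(X_{n+1})=\{y: V(X_{n+1},y)\in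 C_V(X_{n+1})\}$. Then $C_V(X_{n+1})$ is an interval, and $$\mathbb P\{V_{n+1}\in C_V(X_{n+1})\}\ge\alpha,\qquad \mathbb P\{Y_{n+1}\in C(X_{n+1})\}\ge\alpha.$$
   Context: For a distribution $\mathcal F$ on $\mathbb R\cup\{+\infty\}$, $Q(\alpha;\mathcal F)=\inf\{t:\mathbb P_{T\sim\mathcal F}(T\le t)\ge\alpha\}$; $\delta_v$ is the point mass at $v$. *)

From HB Require Import structures.
From mathcomp Require Import all_boot all_order all_algebra.
From mathcomp Require Import all_classical all_reals all_analysis.
Set Implicit Arguments. Unset Strict Implicit. Unset Printing Implicit Defensive.
Import Order.TTheory GRing.Theory Num.Theory.
Local Open Scope classical_set_scope.
Local Open Scope ring_scope.

(** Mutual independence + identical distribution of a finite family of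
    random variables Z i : Omega -> T (product rule over all families of
    measurable sets; taking A j = setT gives every subfamily). *)
Definition iid_family {d dT : measure_display} {R : realType}
  {Omega : measurableType d} (P : probability Omega R)
  {T : measurableType dT} (m : nat) (Z : 'I_m -> Omega -> T) : Prop :=
  (forall i, measurable_fun setT (Z i)) /\
  (forall A : 'I_m -> set T, (forall i, measurable (A i)) ->
     P (\bigcap_(i in setT) (Z i @^-1` A i)) =
     (\prod_(i < m) P (Z i @^-1` A i))%E) /\
  (forall i j (A : set T), measurable A ->
     P (Z i @^-1` A) = P (Z j @^-1` A)).

(** A finite discrete distribution on R ∪ {+oo} (extended reals), given by
    atoms a j with weights w j. Its c.d.f. and its quantile
    Q(beta; F) = inf { t : P_{T ~ F}(T <= t) >= beta }. *)
Definition atoms_cdf {R : realType} (m : nat) (w : 'I_m -> R)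
  (a : 'I_m -> \bar R) (t : \bar R) : R :=
  \sum_(j < m | (a j <= t)%E) w j.

Definition atoms_quantile {R : realType} (m : nat) (w : 'I_m -> R)
  (a : 'I_m -> \bar R) (beta : R) : \bar R :=
  ereal_inf [set t : \bar R | beta <= atoms_cdf w a t].

Section localized.
Context {R : realType} {p n : nat}.
(* indices 'I_n.+1 = {1,...,n+1} with ord_max the test point n+1 *)
Variable Hloc : ('I_n.+1 -> p.-tuple R) -> p.-tuple R -> p.-tuple R -> R.
Variable x : 'I_n.+1 -> p.-tuple R.
Variable Vs : 'I_n.+1 -> R.

Definition Hmat (i j : 'I_n.+1) : R := Hloc x (x i) (x j).

Definition pH (i j : 'I_n.+1) : R := Hmat i j / \sum_(k < n.+1) Hmat i k.

Definition Gamma : set R :=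
  [set g | exists (i : 'I_n.+1) (I : {set 'I_n.+1}), g = \sum_(k in I) pH i k].

(* hat F_i(v) = sum_{j<=n} p_ij delta_{V_j} + p_{i,n+1} delta_v *)
Definition Fi_atoms (v : R) (j : 'I_n.+1) : \bar R :=
  if j == ord_max then v%:E else (Vs j)%:E.

(* hat F = sum_{j<=n} p_{n+1,j} delta_{V_j} + p_{n+1,n+1} delta_{+oo} *)
Definition Fhat_atoms (j : 'I_n.+1) : \bar R :=
  if j == ord_max then +oo%E else (Vs j)%:E.

Definition Vrep (v : R) (i : 'I_n.+1) : R := if i == ord_max then v else Vs i.

Definition coverage (a v : R) : R :=
  n.+1%:R^-1 * \sum_(i < n.+1)
     (if ((Vrep v i)%:E <= atoms_quantile (pH i) (Fi_atoms v) a)%E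
      then 1 else 0).

(* smallest element of Gamma satisfying the coverage condition
   (Gamma is finite and the set is nonempty, so inf = min) *)
Definition alpha_tilde (alpha v : R) : R :=
  inf [set a | Gamma a /\ alpha <= coverage a v].

Definition C_V (alpha : R) : set R :=
  [set v | (v%:E <= atoms_quantile (pH ord_max) Fhat_atoms (alpha_tilde alpha v))%E].

End localized.

Definition C_Y {R : realType} {p n : nat}
  (Hloc : ('I_n.+1 -> p.-tuple R) -> p.-tuple R -> p.-tuple R -> R)
  (V : p.-tuple R * R -> R) (x : 'I_n.+1 -> p.-tuple R) (Vs : 'I_n.+1 -> R)
  (alpha : R) : set R :=
  [set y | C_V Hloc x Vs alpha (V (x ord_max, y))].

From HB Require Import structures.
From mathcomp Require Import all_boot all_order all_algebra.
From mathcomp Require Import all_classical all_reals all_analysis.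
From mathcomp Require Import measurable_realfun fingroup perm.
Import Order.TTheory GRing.Theory Num.Theory.
Local Open Scope classical_set_scope.
Local Open Scope ring_scope.
Set Implicit Arguments. Unset Strict Implicit. Unset Printing Implicit Defensive.

(* Let S_i be the p^H_i-mass of the scores lying strictly below V_i.  Since
   v <= Q(b; F) exactly when the mass F puts strictly below v is less than b,
   at v = V_(n+1) the coverage of level a is the fraction of indices i with
   S_i < a, and V_(n+1) lies in C_V exactly when S_(n+1) < alpha_tilde.  Every
   index qualifies at level 1 (the diagonal weight is positive), so alpha_tilde
   is a minimum over the finite set Gamma.  Raising the test value raises
   S_(n+1) and lowers every other S_i, so C_V is a down-set, hence an interval.
   Relabelling the data points permutes the S_i and leaves alpha_tilde fixed;
   by exchangeability of the i.i.d. sample all the events S_i < alpha_tilde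
   thus have the same probability, and since at least alpha (n+1) of them hold
   at every outcome, that probability is at least alpha. *)

Lemma ler_sum_subpred (R : numDomainType) m (w : 'I_m -> R) (P Q : pred 'I_m) :
  (forall j, 0 <= w j) -> (forall j, P j -> Q j) ->
  \sum_(j < m | P j) w j <= \sum_(j < m | Q j) w j.
Proof.
move=> w_ge0 PQ; rewrite [leLHS]big_mkcond [leRHS]big_mkcond /=.
apply: ler_sum => j _; case: ifP => [/PQ ->//|_]; by case: ifP.
Qed.

Lemma le_atoms_quantile (R : realType) m (w : 'I_m -> R) (a : 'I_m -> \bar R)
    (beta v : R) : (forall j, 0 <= w j) ->
  (v%:E <= atoms_quantile w a beta)%E = (\sum_(j < m | (a j < v%:E)%E) w j < beta).
Proof.
move=> w_ge0; apply/idP/idP => [v_le|mass_lt].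
- rewrite ltNge; apply/negP => beta_le.
  pose t := (\big[Order.max/-oo]_(j < m | (a j < v%:E)%E) a j)%E.
  have t_lt : (t < v%:E)%E.
    by rewrite /t; elim/big_ind: _ => [|x y xv yv|//]; rewrite ?ltNyr ?gt_max ?xv ?yv.
  have beta_le_t : beta <= atoms_cdf w a t.
    apply: (le_trans beta_le); apply: ler_sum_subpred => // j aj.
    exact: (bigmax_sup j).
  by have := le_trans v_le (ereal_inf_lbound beta_le_t); rewrite leNgt t_lt.
- apply: le_ereal_inf_tmp => t /= beta_le; rewrite leNgt; apply/negP => t_lt.
  have : atoms_cdf w a t < beta.
    apply: le_lt_trans mass_lt; apply: ler_sum_subpred => // j ajt.
    exact: le_lt_trans ajt t_lt.
  by rewrite ltNge beta_le.
Qed.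

Section localizer.
Variables (R : realType) (p n : nat).
Variable Hloc : ('I_n.+1 -> p.-tuple R) -> p.-tuple R -> p.-tuple R -> R.
Hypothesis Hloc_ge0 : forall xs a b, 0 <= Hloc xs a b.
Hypothesis Hloc_diag_gt0 : forall xs a, 0 < Hloc xs a a.
Implicit Types (xs : 'I_n.+1 -> p.-tuple R) (vs : 'I_n.+1 -> R).

Definition rank_mass xs vs (i : 'I_n.+1) : R :=
  \sum_(j < n.+1 | vs j < vs i) pH Hloc xs i j.

Definition Gamma_elt xs (k : 'I_n.+1 * {set 'I_n.+1}) : R :=
  \sum_(j in k.2) pH Hloc xs k.1 j.

Lemma GammaP xs a : Gamma Hloc xs a <-> exists k, a = Gamma_elt xs k.
Proof. by split => [[i [I ->]]|[[i I] ->]]; [exists (i, I)|exists i, I]. Qed.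

Lemma Hmat_row_gt0 xs i : 0 < \sum_(k < n.+1) Hmat Hloc xs i k.
Proof.
rewrite (bigD1 i) //=; apply: ltr_wpDr; last exact: Hloc_diag_gt0.
by apply: sumr_ge0 => k _; exact: Hloc_ge0.
Qed.

Lemma pH_ge0 xs i j : 0 <= pH Hloc xs i j.
Proof. exact: divr_ge0 (Hloc_ge0 _ _ _) (ltW (Hmat_row_gt0 _ _)). Qed.

Lemma pH_diag_gt0 xs i : 0 < pH Hloc xs i i.
Proof. exact: divr_gt0 (Hloc_diag_gt0 _ _) (Hmat_row_gt0 _ _). Qed.

Lemma sum_pH xs i : \sum_(j < n.+1) pH Hloc xs i j = 1.
Proof. by rewrite -mulr_suml divff // lt0r_neq0 ?Hmat_row_gt0. Qed.

Lemma rank_mass_lt1 xs vs i : rank_mass xs vs i < 1.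
Proof.
rewrite -(sum_pH xs i) (bigD1 i) //=; apply: ltr_pwDl; first exact: pH_diag_gt0.
by apply: ler_sum_subpred => [j|j]; [exact: pH_ge0|apply: contraTneq => ->; rewrite ltxx].
Qed.

Lemma coverage_at_data xs vs a :
  coverage Hloc xs vs a (vs ord_max) =
  n.+1%:R^-1 * \sum_(i < n.+1) (if rank_mass xs vs i < a then 1 else 0).
Proof.
rewrite /coverage; congr (_ * _); apply: eq_bigr => i _.
have -> : Vrep vs (vs ord_max) i = vs i by rewrite /Vrep; case: eqP => // ->.
have -> : Fi_atoms vs (vs ord_max) = fun j => (vs j)%:E.
  by apply: funext => j; rewrite /Fi_atoms; case: eqP => // ->.
rewrite le_atoms_quantile; last exact: pH_ge0.
by under eq_bigl do rewrite lte_fin.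
Qed.

Lemma C_V_at_data xs vs alpha :
  C_V Hloc xs vs alpha (vs ord_max) <->
  rank_mass xs vs ord_max < alpha_tilde Hloc xs vs alpha (vs ord_max).
Proof.
rewrite /C_V /= le_atoms_quantile; last exact: pH_ge0.
suff -> : \sum_(j < n.+1 | (Fhat_atoms vs j < (vs ord_max)%:E)%E) pH Hloc xs ord_max j =
          rank_mass xs vs ord_max by [].
apply: eq_bigl => j; rewrite /Fhat_atoms; case: eqP => [->|_]; last by rewrite lte_fin.
by rewrite ltxx.
Qed.

Lemma C_V_Vrep xs Vs alpha v :
  C_V Hloc xs Vs alpha v <-> C_V Hloc xs (Vrep Vs v) alpha (Vrep Vs v ord_max).
Proof.
have VrepK : Vrep (Vrep Vs v) v = Vrep Vs v by apply: funext => j; rewrite /Vrep; case: eqP.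
have Fi_Vrep : Fi_atoms (Vrep Vs v) v = Fi_atoms Vs v.
  by apply: funext => j; rewrite /Fi_atoms /Vrep; case: eqP.
have Fhat_Vrep : Fhat_atoms (Vrep Vs v) = Fhat_atoms Vs.
  by apply: funext => j; rewrite /Fhat_atoms /Vrep; case: eqP.
by rewrite {2}/Vrep eqxx /C_V /alpha_tilde /coverage /= VrepK Fi_Vrep Fhat_Vrep.
Qed.

Lemma rank_mass_Vrep_antitone xs Vs v w i : v <= w -> i != ord_max ->
  rank_mass xs (Vrep Vs w) i <= rank_mass xs (Vrep Vs v) i.
Proof.
move=> le_vw i_neq; apply: ler_sum_subpred => [j|j]; first exact: pH_ge0.
rewrite /Vrep (negPf i_neq); case: eqP => // _; exact: le_lt_trans.
Qed.

Lemma rank_mass_Vrep_last_monotone xs Vs v w : v <= w ->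
  rank_mass xs (Vrep Vs v) ord_max <= rank_mass xs (Vrep Vs w) ord_max.
Proof.
move=> le_vw; apply: ler_sum_subpred => [j|j]; first exact: pH_ge0.
rewrite /Vrep eqxx; case: eqP => [_|_ lt_v]; first by rewrite ltxx.
exact: lt_le_trans le_vw.
Qed.

Section level.
Variable alpha : R.
Hypothesis alpha_lt1 : alpha < 1.

Lemma alpha_tilde_spec xs vs (a0 := alpha_tilde Hloc xs vs alpha (vs ord_max)) :
  [/\ Gamma Hloc xs a0, alpha <= coverage Hloc xs vs a0 (vs ord_max)
    & forall a, Gamma Hloc xs a -> alpha <= coverage Hloc xs vs a (vs ord_max) -> a0 <= a].
Proof.
pose admissible k := alpha <= coverage Hloc xs vs (Gamma_elt xs k) (vs ord_max).
have admissible_full : admissible (ord_max, [set: 'I_n.+1]%SET).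
  rewrite /admissible.
  have -> : Gamma_elt xs (ord_max, [set: 'I_n.+1]%SET) = 1.
    by rewrite -(sum_pH xs ord_max); apply: eq_bigl => j; rewrite inE.
  rewrite coverage_at_data.
  under eq_bigr do rewrite rank_mass_lt1.
  by rewrite sumr_const card_ord -[_ *+ _]mulr_natr mul1r mulVf // ltW.
have [k k_adm k_min] := arg_minP (Gamma_elt xs) admissible_full.
have Gamma_k : Gamma Hloc xs (Gamma_elt xs k) by apply/GammaP; exists k.
have k_lb : lbound [set a | Gamma Hloc xs a /\ alpha <= coverage Hloc xs vs a (vs ord_max)]
    (Gamma_elt xs k).
  by move=> a [/GammaP[k' ->] /k_min].
have -> : a0 = Gamma_elt xs k.
  apply/eqP; rewrite eq_le; apply/andP; split.
  - by apply: ge_inf; [exists (Gamma_elt xs k)|split].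
  - by apply: lb_le_inf; [exists (Gamma_elt xs k)|].
by split=> // a Gamma_a cov_a; exact: k_lb a (conj Gamma_a cov_a).
Qed.

Lemma C_V_le xs Vs v w : v <= w -> C_V Hloc xs Vs alpha w -> C_V Hloc xs Vs alpha v.
Proof.
move=> le_vw /C_V_Vrep /C_V_at_data lt_w; apply/C_V_Vrep/C_V_at_data.
rewrite ltNge; apply/negP => a_v_le.
(* Otherwise alpha_tilde(v) would still be admissible at w, forcing
   alpha_tilde(w) <= S_(n+1)(v) <= S_(n+1)(w) < alpha_tilde(w). *)
have [Gamma_v cov_v _] := alpha_tilde_spec xs (Vrep Vs v).
have [_ _ min_w] := alpha_tilde_spec xs (Vrep Vs w).
have cov_w : alpha <= coverage Hloc xs (Vrep Vs w)
    (alpha_tilde Hloc xs (Vrep Vs v) alpha (Vrep Vs v ord_max)) (Vrep Vs w ord_max).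
  apply: (le_trans cov_v); rewrite !coverage_at_data ler_wpM2l ?invr_ge0 //.
  apply: ler_sum => i _; case: (eqVneq i ord_max) => [->|i_neq].
    by rewrite ltNge a_v_le /=; case: ifP.
  case: ifP => [lt_a|_]; last by case: ifP.
  by rewrite (le_lt_trans (rank_mass_Vrep_antitone _ _ le_vw i_neq) lt_a).
have := le_trans (min_w _ Gamma_v cov_w)
  (le_trans a_v_le (rank_mass_Vrep_last_monotone _ _ le_vw)).
by rewrite leNgt lt_w.
Qed.

Lemma C_V_is_interval xs Vs : is_interval (C_V Hloc xs Vs alpha).
Proof. by move=> v w _ Cw u /andP[_ le_uw]; exact: C_V_le le_uw Cw. Qed.

Lemma alpha_count_le xs vs :
  alpha * n.+1%:R <=
  \sum_(i < n.+1) (if rank_mass xs vs i < alpha_tilde Hloc xs vs alpha (vs ord_max) then 1 else 0).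
Proof.
have [_ + _] := alpha_tilde_spec xs vs.
by rewrite coverage_at_data ler_pdivlMl ?ltr0n // mulrC.
Qed.

End level.

Section relabeling.
Hypothesis Hloc_perm : forall (s : 'I_n.+1 -> 'I_n.+1) xs, bijective s -> Hloc (xs \o s) = Hloc xs.
Implicit Type s : {perm 'I_n.+1}.

Lemma pH_perm s xs i j : pH Hloc (xs \o s) i j = pH Hloc xs (s i) (s j).
Proof.
have Hmat_perm i' j' : Hmat Hloc (xs \o s) i' j' = Hmat Hloc xs (s i') (s j').
  by rewrite /Hmat Hloc_perm //; exists s^-1%g; [exact: permK|exact: permKV].
rewrite /pH Hmat_perm [in RHS](reindex_inj (@perm_inj _ s)) /=.
by under eq_bigr do rewrite Hmat_perm.
Qed.

Lemma rank_mass_perm s xs vs i : rank_mass (xs \o s) (vs \o s) i = rank_mass xs vs (s i).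
Proof.
rewrite /rank_mass [RHS](reindex_inj (@perm_inj _ s)) /=.
by under eq_bigr do rewrite pH_perm.
Qed.

Lemma coverage_perm s xs vs a :
  coverage Hloc (xs \o s) (vs \o s) a (vs (s ord_max)) = coverage Hloc xs vs a (vs ord_max).
Proof.
rewrite -[vs (s _)]/((vs \o s) ord_max) !coverage_at_data.
rewrite [in RHS](reindex_inj (@perm_inj _ s)) /=.
by under eq_bigr do rewrite rank_mass_perm.
Qed.

Lemma Gamma_perm_sub s xs : Gamma Hloc (xs \o s) `<=` Gamma Hloc xs.
Proof.
move=> _ [i [I ->]]; exists (s i), (s @: I)%SET.
rewrite big_imset /=; last by move=> ? ? _ _; exact: perm_inj.
by apply: eq_bigr => k _; rewrite pH_perm.
Qed.

Lemma Gamma_perm s xs : Gamma Hloc (xs \o s) = Gamma Hloc xs.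
Proof.
apply/seteqP; split; first exact: Gamma_perm_sub.
have xsK : (xs \o s) \o s^-1%g = xs by apply: funext => i /=; rewrite permKV.
by rewrite -[in X in X `<=` _]xsK; exact: Gamma_perm_sub.
Qed.

Lemma alpha_tilde_perm s xs vs alpha :
  alpha_tilde Hloc (xs \o s) (vs \o s) alpha (vs (s ord_max)) =
  alpha_tilde Hloc xs vs alpha (vs ord_max).
Proof.
rewrite /alpha_tilde Gamma_perm; congr (inf _); apply: funext => a /=.
by rewrite coverage_perm.
Qed.

End relabeling.
End localizer.

Lemma measurable_invr (R : realType) : measurable_fun [set: R] (@GRing.inv R).
Proof.
rewrite -(setUv [set (0 : R)]); apply/measurable_funU => //; first exact: measurableC.
split; first exact: measurable_fun_set1.
apply: open_continuous_measurable_fun; first exact/closed_openC/closed_eq.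
by move=> x /set_mem /eqP x_neq0; exact: inv_continuous.
Qed.

Lemma measurable_bool_set d (T : measurableType d) (b : T -> bool) :
  measurable_fun setT b -> measurable [set t | b t].
Proof. by move=> mb; rewrite -preimage_true -[X in measurable X]setTI; exact: mb. Qed.

Definition permt (T : Type) m (s : {perm 'I_m}) (t : m.-tuple T) : m.-tuple T :=
  [tuple tnth t (s i) | i < m].

Lemma measurable_permt d (T : measurableType d) m (s : {perm 'I_m}) :
  measurable_fun setT (@permt T m s).
Proof.
apply/measurable_fun_tnthP => i.
rewrite (_ : _ \o _ = fun t => tnth t (s i)); first exact: measurable_tnth.
by apply: funext => t /=; rewrite tnth_mktuple.
Qed.

Section tuple_data.
Variables (R : realType) (p n : nat).
Variable Hloc : ('I_n.+1 -> p.-tuple R) -> p.-tuple R -> p.-tuple R -> R.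
Hypothesis Hloc_ge0 : forall xs a b, 0 <= Hloc xs a b.
Hypothesis Hloc_diag_gt0 : forall xs a, 0 < Hloc xs a a.
Hypothesis Hloc_measurable : measurable_fun setT
  (fun t : n.+1.-tuple (p.-tuple R) * (p.-tuple R * p.-tuple R) => Hloc (tnth t.1) t.2.1 t.2.2).
Variable V : p.-tuple R * R -> R.
Hypothesis V_measurable : measurable_fun setT V.

Local Notation data := (n.+1.-tuple (p.-tuple R * R)).

Definition tuple_xs (t : data) (i : 'I_n.+1) : p.-tuple R := (tnth t i).1.
Definition tuple_vs (t : data) (i : 'I_n.+1) : R := V (tnth t i).

Lemma measurable_tuple_xs i : measurable_fun setT (tuple_xs ^~ i).
Proof. exact: measurableT_comp measurable_fst (measurable_tnth i). Qed.

Lemma measurable_tuple_vs i : measurable_fun setT (tuple_vs ^~ i).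
Proof. exact: measurableT_comp V_measurable (measurable_tnth i). Qed.

Lemma measurable_Hmat i j : measurable_fun setT (fun t => Hmat Hloc (tuple_xs t) i j).
Proof.
pose embed (t : data) := ([tuple tuple_xs t k | k < n.+1], (tuple_xs t i, tuple_xs t j)).
have -> : (fun t => Hmat Hloc (tuple_xs t) i j) =
    (fun u => Hloc (tnth u.1) u.2.1 u.2.2) \o embed.
  apply: funext => t; rewrite /Hmat /=; congr Hloc.
  by apply: funext => k; rewrite tnth_mktuple.
apply: measurableT_comp Hloc_measurable _.
apply: measurable_fun_pair; last by apply: measurable_fun_pair; exact: measurable_tuple_xs.
apply/measurable_fun_tnthP => k.
rewrite (_ : _ \o _ = tuple_xs ^~ k); first exact: measurable_tuple_xs.
by apply: funext => t /=; rewrite tnth_mktuple.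
Qed.

Lemma measurable_pH i j : measurable_fun setT (fun t => pH Hloc (tuple_xs t) i j).
Proof.
apply: measurable_funM; first exact: measurable_Hmat.
apply: measurableT_comp (@measurable_invr R) _.
by apply: measurable_sum => k; exact: measurable_Hmat.
Qed.

Lemma measurable_rank_mass i :
  measurable_fun setT (fun t => rank_mass Hloc (tuple_xs t) (tuple_vs t) i).
Proof.
rewrite /rank_mass; under eq_fun do rewrite big_mkcond /=.
apply: measurable_sum => j; apply: measurable_fun_ifT.
- by apply: measurable_fun_ltr; exact: measurable_tuple_vs.
- exact: measurable_pH.
- exact: measurable_cst.
Qed.

Lemma measurable_Gamma_elt k : measurable_fun setT (fun t => Gamma_elt Hloc (tuple_xs t) k).
Proof.
rewrite /Gamma_elt; under eq_fun do rewrite big_mkcond /=.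
by apply: measurable_sum => j; case: (j \in k.2); [exact: measurable_pH|exact: measurable_cst].
Qed.

Lemma measurable_coverage_at_data k : measurable_fun setT (fun t =>
  coverage Hloc (tuple_xs t) (tuple_vs t) (Gamma_elt Hloc (tuple_xs t) k) (tuple_vs t ord_max)).
Proof.
under eq_fun do rewrite coverage_at_data //.
apply: measurable_funM; first exact: measurable_cst.
apply: measurable_sum => i; apply: measurable_fun_ifT; try exact: measurable_cst.
by apply: measurable_fun_ltr; [exact: measurable_rank_mass|exact: measurable_Gamma_elt].
Qed.

Definition conformal_event (alpha : R) : set data :=
  [set t | C_V Hloc (tuple_xs t) (tuple_vs t) alpha (tuple_vs t ord_max)].

Lemma conformal_eventP alpha t : conformal_event alpha t <->
  rank_mass Hloc (tuple_xs t) (tuple_vs t) ord_max <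
  alpha_tilde Hloc (tuple_xs t) (tuple_vs t) alpha (tuple_vs t ord_max).
Proof. exact: C_V_at_data. Qed.

Lemma measurable_conformal_event alpha : alpha < 1 -> measurable (conformal_event alpha).
Proof.
move=> alpha_lt1.
(* alpha_tilde is the least admissible element of the finite set Gamma *)
have -> : conformal_event alpha = \bigcap_(k in [set: 'I_n.+1 * {set 'I_n.+1}])
    [set t | (alpha <= coverage Hloc (tuple_xs t) (tuple_vs t)
                         (Gamma_elt Hloc (tuple_xs t) k) (tuple_vs t ord_max)) ==>
             (rank_mass Hloc (tuple_xs t) (tuple_vs t) ord_max < Gamma_elt Hloc (tuple_xs t) k)].
  apply/seteqP; split => t.
  - have [_ _ min_a] := alpha_tilde_spec Hloc_ge0 Hloc_diag_gt0 alpha_lt1 (tuple_xs t) (tuple_vs t).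
    move=> /conformal_eventP lt_a k _; apply/implyP => cov_k.
    by apply: lt_le_trans lt_a (min_a _ _ cov_k); apply/GammaP; exists k.
  - have [/GammaP[k a_eq] cov_a _] :=
      alpha_tilde_spec Hloc_ge0 Hloc_diag_gt0 alpha_lt1 (tuple_xs t) (tuple_vs t).
    move=> all_k; apply/conformal_eventP; rewrite a_eq.
    by have /implyP := all_k k I; apply; rewrite -a_eq.
apply: fin_bigcap_measurable; first exact: finite_finset.
move=> k _; apply: measurable_bool_set; under eq_fun do rewrite implybE.
apply: measurable_or.
  apply/measurable_neg/measurable_fun_ler; first exact: measurable_cst.
  exact: measurable_coverage_at_data.
by apply: measurable_fun_ltr; [exact: measurable_rank_mass|exact: measurable_Gamma_elt].
Qed.

Hypothesis Hloc_perm :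
  forall (s : 'I_n.+1 -> 'I_n.+1) xs, bijective s -> Hloc (xs \o s) = Hloc xs.

Lemma conformal_event_permt alpha s t : conformal_event alpha (permt s t) <->
  rank_mass Hloc (tuple_xs t) (tuple_vs t) (s ord_max) <
  alpha_tilde Hloc (tuple_xs t) (tuple_vs t) alpha (tuple_vs t ord_max).
Proof.
have xs_perm : tuple_xs (permt s t) = tuple_xs t \o s.
  by apply: funext => i; rewrite /tuple_xs tnth_mktuple.
have vs_perm : tuple_vs (permt s t) = tuple_vs t \o s.
  by apply: funext => i; rewrite /tuple_vs tnth_mktuple.
apply: iff_trans (conformal_eventP _ _) _.
rewrite xs_perm vs_perm (rank_mass_perm Hloc_perm) /=.
by rewrite (alpha_tilde_perm Hloc_ge0 Hloc_diag_gt0 Hloc_perm).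
Qed.

Definition swapped_event alpha (i : 'I_n.+1) : set data :=
  permt (tperm i ord_max) @^-1` conformal_event alpha.

Lemma measurable_swapped_event alpha i : alpha < 1 -> measurable (swapped_event alpha i).
Proof.
move=> alpha_lt1; rewrite -[X in measurable X]setTI.
exact: measurable_permt _ (measurable_conformal_event alpha_lt1).
Qed.

Lemma sum_swapped_events_ge alpha t : alpha < 1 ->
  alpha * n.+1%:R <= \sum_(i < n.+1) \1_(swapped_event alpha i) t.
Proof.
move=> alpha_lt1; set xs := tuple_xs t; set vs := tuple_vs t.
rewrite (eq_bigr (fun i =>
  if rank_mass Hloc xs vs i < alpha_tilde Hloc xs vs alpha (vs ord_max) then 1 else 0)).
  exact: alpha_count_le.
move=> i _; rewrite indicE; have := conformal_event_permt alpha (tperm i ord_max) t.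
rewrite tpermR => swapE.
case: ifP => [lt_a|ge_a]; first by rewrite mem_set //; apply/swapE.
by rewrite memNset // => /swapE; rewrite ge_a.
Qed.

End tuple_data.

Section exchangeability.
Context (d dT : measure_display) (Omega : measurableType d) (R : realType).
Context (P : probability Omega R) (T : measurableType dT) (m : nat).

Definition box (A : 'I_m -> set T) : set (m.-tuple T) := [set t | forall i, A i (tnth t i)].

Definition boxes : set (set (m.-tuple T)) :=
  [set box A | A in [set A | forall i, measurable (A i)]].

Lemma measurable_tuple_boxes : measurable = <<s boxes >>.
Proof.
apply/seteqP; split.
- apply: smallest_sub; first exact: smallest_sigma_algebra.
  elim/big_ind: _ => [|X Y sX sY|i _]; first exact: sub0set.
    by rewrite subUset.
  move=> _ [A mA <-]; apply: sub_sigma_algebra.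
  exists (fun j => if j == i then A else setT) => [j|]; first by case: (j == i).
  apply/seteqP; split => t /=; first by move=> /(_ i); rewrite eqxx.
  by move=> [_ At] j; case: eqP => [->|].
- apply: smallest_sub; first exact: sigma_algebra_measurable.
  move=> _ [A mA <-].
  have -> : box A = \bigcap_(i in [set: 'I_m]) ((fun t => tnth t i) @^-1` A i).
    by apply/seteqP; split => t /= At i; [move=> _; exact: At|exact: At i I].
  apply: fin_bigcap_measurable; first exact: finite_finset.
  by move=> i _; rewrite -[X in measurable X]setTI; exact: measurable_tnth.
Qed.

Lemma tuple_law_eq (Z1 Z2 : Omega -> m.-tuple T) :
  measurable_fun setT Z1 -> measurable_fun setT Z2 ->
  (forall A, (forall i, measurable (A i)) -> P (Z1 @^-1` box A) = P (Z2 @^-1` box A)) ->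
  forall B, measurable B -> P (Z1 @^-1` B) = P (Z2 @^-1` B).
Proof.
move=> mZ1 mZ2 Z12 B mB.
pose law (Z : Omega -> m.-tuple T) (mZ : measurable_fun setT Z) :=
  distribution P (HB.pack Z (isMeasurableFun.Build _ _ _ _ Z mZ) : {mfun Omega >-> _}).
have boxesI : setI_closed boxes.
  move=> _ _ [A1 mA1 <-] [A2 mA2 <-]; exists (fun i => A1 i `&` A2 i).
    by move=> i; exact: measurableI.
  apply/seteqP; split => t /=; last by move=> [A1t A2t] i; split.
  by move=> A12t; split => i; case: (A12t i).
have boxT : boxes setT.
  by exists (fun=> setT) => //; apply/seteqP; split.
have law_fin (k : nat) : (law Z1 mZ1 ((fun=> setT) k) < +oo)%E.
  by rewrite /law /distribution /pushforward preimage_setT probability_setT ltry.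
have cover : \bigcup_(k : nat) (setT : set (m.-tuple T)) = setT.
  by apply/seteqP; split => // t _; exists 0%N.
have law12 A : boxes A -> law Z1 mZ1 A = law Z2 mZ2 A by move=> [A' mA' <-]; exact: Z12.
exact: (measure_unique boxes (fun=> setT) measurable_tuple_boxes boxesI (fun=> boxT)
  cover (law Z1 mZ1) (law Z2 mZ2) law12 law_fin B mB).
Qed.

Lemma measurable_tuple_family (Z : 'I_m -> Omega -> T) :
  (forall i, measurable_fun setT (Z i)) ->
  measurable_fun setT (fun w => [tuple Z i w | i < m]).
Proof.
move=> mZ; apply/measurable_fun_tnthP => i.
by rewrite (_ : _ \o _ = Z i); [exact: mZ|apply: funext => w /=; rewrite tnth_mktuple].
Qed.

Lemma iid_tuple_perm (Z : 'I_m -> Omega -> T) (s : {perm 'I_m}) B :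
  iid_family P Z -> measurable B ->
  P ((fun w => permt s [tuple Z i w | i < m]) @^-1` B) =
  P ((fun w => [tuple Z i w | i < m]) @^-1` B).
Proof.
move=> [mZ [Z_indep Z_ident]] mB.
have mZt := measurable_tuple_family mZ.
apply: tuple_law_eq => //; first exact: measurableT_comp (measurable_permt s) mZt.
move=> A mA.
have -> : (fun w => [tuple Z i w | i < m]) @^-1` box A = \bigcap_(i in setT) (Z i @^-1` A i).
  by apply/seteqP; split => w /= Aw i; [move=> _; have := Aw i|have := Aw i I];
    rewrite tnth_mktuple.
have -> : (fun w => permt s [tuple Z i w | i < m]) @^-1` box A =
    \bigcap_(i in setT) (Z i @^-1` A (s^-1 i)%g).
  apply/seteqP; split => w /= Aw i.
    by move=> _; have := Aw (s^-1 i)%g; rewrite !tnth_mktuple permKV.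
  by rewrite !tnth_mktuple; have := Aw (s i) I; rewrite permK.
rewrite !Z_indep // [LHS](reindex_inj (@perm_inj _ s)) /=.
by apply: eq_bigr => i _; rewrite permK; exact: Z_ident.
Qed.

End exchangeability.

Lemma probability_ge_of_sum_indic d (Omega : measurableType d) (R : realType)
    (P : probability Omega R) m (A : 'I_m.+1 -> set Omega) (B : set Omega) (c : R) :
  (forall i, measurable (A i)) -> (forall i, P (A i) = P B) ->
  (forall w, c * m.+1%:R <= \sum_(i < m.+1) \1_(A i) w) -> (c%:E <= P B)%E.
Proof.
move=> mA PA count_ge.
have PB_ge0 : (0 <= P B)%E by rewrite -(PA ord0) measure_ge0.
have [c_le0|c_gt0] := lerP c 0; first exact: le_trans PB_ge0.
have PB_fin : P B \is a fin_num by rewrite -(PA ord0) (fin_num_measure P _ (mA ord0)).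
have mindic i : measurable_fun setT (fun w => (\1_(A i) w : R)%:E).
  exact/measurable_EFinP/measurable_indic.
have mean_ge : ((c * m.+1%:R)%:E <= \sum_(i < m.+1) P (A i))%E.
  rewrite (eq_bigr (fun i => \int[P]_w (\1_(A i) w)%:E)%E); last first.
    by move=> i _; rewrite integral_indic // setIT.
  have indic_ge0 i w : [set: Omega] w -> (0 <= (\1_(A i) w : R)%:E)%E.
    by rewrite lee_fin indicE ler0n.
  rewrite -(ge0_integral_sum P measurableT mindic indic_ge0).
  have -> : (c * m.+1%:R)%:E = (\int[P]_w cst (c * m.+1%:R)%:E w)%E.
    rewrite integral_cst // -[LHS]mule1; congr (_ * _)%E; exact/esym/probability_setT.
  apply: ge0_le_integral => //.
  - by move=> w _; rewrite lee_fin mulr_ge0 // ltW.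
  - exact: emeasurable_sum mindic.
  - by move=> w _; rewrite sumEFin lee_fin count_ge.
move: mean_ge; rewrite (eq_bigr (fun=> P B)) // -(fineK PB_fin).
by rewrite sumEFin sumr_const card_ord !lee_fin -[fine _ *+ _]mulr_natr ler_pM2r ?ltr0n.
Qed.

Unset Implicit Arguments.

Theorem lemma1 (R : realType) (d : measure_display) (Omega : measurableType d)
  (P : probability Omega R) (p n : nat)
  (X : 'I_n.+1 -> Omega -> p.-tuple R) (Y : 'I_n.+1 -> Omega -> R)
  (hiid : iid_family P (fun i w => (X i w, Y i w)))
  (V : p.-tuple R * R -> R) (hV : measurable_fun setT V)
  (Hloc : ('I_n.+1 -> p.-tuple R) -> p.-tuple R -> p.-tuple R -> R)
  (hHsym : forall (s : 'I_n.+1 -> 'I_n.+1) (xs : 'I_n.+1 -> p.-tuple R),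
      bijective s -> Hloc (xs \o s) = Hloc xs)
  (hH01 : forall xs a b, 0 <= Hloc xs a b <= 1)
  (hH1 : forall xs a, Hloc xs a a = 1)
  (hHmeas : measurable_fun setT
     (fun t : n.+1.-tuple (p.-tuple R) * (p.-tuple R * p.-tuple R) =>
        Hloc (tnth t.1) t.2.1 t.2.2))
  (alpha : R) (halpha : 0 < alpha < 1) :
  let xs := fun w i => X i w in
  let Vs := fun w i => V (X i w, Y i w) in
  (forall w, is_interval (C_V Hloc (xs w) (Vs w) alpha)) /\
  (alpha%:E <= P [set w | C_V Hloc (xs w) (Vs w) alpha (Vs w ord_max)])%E /\
  (alpha%:E <= P [set w | C_Y Hloc V (xs w) (Vs w) alpha (Y ord_max w)])%E.
Proof.
move=> xs Vs; have /andP[_ alpha_lt1] := halpha.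
have Hloc_ge0 xs' a b : 0 <= Hloc xs' a b by have /andP[] := hH01 xs' a b.
have Hloc_diag_gt0 xs' a : 0 < Hloc xs' a a by rewrite hH1.
split; first by move=> w; exact: C_V_is_interval.
pose data w := [tuple (X i w, Y i w) | i < n.+1].
have mdata : measurable_fun setT data := measurable_tuple_family hiid.1.
pose E := conformal_event Hloc V alpha.
have mE : measurable E by exact: measurable_conformal_event.
have data_E : data @^-1` E = [set w | C_V Hloc (xs w) (Vs w) alpha (Vs w ord_max)].
  have xs_data w : tuple_xs (data w) = xs w.
    by apply: funext => i; rewrite /tuple_xs tnth_mktuple.
  have vs_data w : tuple_vs V (data w) = Vs w.
    by apply: funext => i; rewrite /tuple_vs tnth_mktuple.
  by apply: eq_set => w; rewrite -xs_data -vs_data.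
suff cov : (alpha%:E <= P (data @^-1` E))%E by rewrite data_E in cov; split.
apply: (@probability_ge_of_sum_indic _ _ _ _ _ (fun i => data @^-1` swapped_event Hloc V alpha i)).
- move=> i; rewrite -[X in measurable X]setTI.
  by apply: mdata => //; exact: measurable_swapped_event.
- by move=> i; exact: iid_tuple_perm hiid mE.
- by move=> w; exact: sum_swapped_events_ge.
Qed.
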